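(* Consider the two-individual system under (h1), (h2), (h3), and suppose $M>0$. Let $x_*=-\frac{1-\sqrt{1-(\tanh M)^2}}{\tanh M}$. Then there exists an integer $m\ge1$ such that either individual 2 acts at some time in $(0,(m+1)T]$, or individual 2 has not acted on $[0,mT]$ and $x_2(mT)>x_*$.
   Context: Two-individual model ($n=2$): parameters $\sigma_A,\sigma_S\ge 0$, $\sigma_C>0$, $\mu_S\in[0,1]$, $\mu_C>0$, $r>0$, $\tau\in(0,1)$, $\alpha_1,\alpha_2\in(-1,1)$. States $x_i\in(-1,1)$, $y_i\in[0,1]$, with $\gamma_1=y_2$, $\gamma_2=y_1$. Between action events: $\dot x_i=[\sigma_A\alpha_i+\sigma_S(\gamma_i-\mu_S)]\,\sigma_C(\gamma_i+\mu_C)(1-x_i)(1+x_i)$, $\dot y_i=-ry_i$. Individual $i$ ''acts'' at time $t$ when $x_i(t)$ reaches $\tau$; immediately afterwards $x_i$ is reset to $0$ and $y_i$ to $1$, and evolution resumes. Hypotheses: (h1) $\sigma_A\alpha_1-\sigma_S\mu_S>0$; (h2) $\sigma_A\alpha_2-\sigma_S\mu_S\le0$; (h3) $x_1(0)=y_1(0)=y_2(0)=0$ and $x_2(0)\in(-1,\tau)$. Constants: $A_1=(\sigma_A\alpha_1-\sigma_S\mu_S)\sigma_C\mu_C$, $T=\tanh^{-1}(\tau)/A_1$, $A=(\sigma_A\alpha_2-\sigma_S\mu_S)\sigma_C\mu_C$, $B=-\frac1r\big[(\sigma_A\alpha_2-\sigma_S\mu_S)\sigma_C+\sigma_S\sigma_C\mu_C\big]$,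 $C=-\frac{\sigma_S\sigma_C}{2r}$, $M=AT+Be^{-rT}+Ce^{-2rT}-B-C$. *)

From Stdlib Require Import Reals.
From Coquelicot Require Import Coquelicot.
Open Scope R_scope.

Definition atanh (u : R) : R := ln ((1 + u) / (1 - u)) / 2.

Definition has_right_deriv (f : R -> R) (t l : R) : Prop :=
  filterlim (fun h => (f (t + h) - f t) / h) (at_right 0) (locally l).

Definition acts (tau : R) (x : R -> R) (t : R) : Prop :=
  0 < t /\ filterlim x (at_left t) (locally tau).

Definition xfield (sA sS sC muS muC alpha g x : R) : R :=
  (sA * alpha + sS * (g - muS)) * (sC * (g + muC)) * ((1 - x) * (1 + x)).

(* Hybrid trajectory of one individual i with state (x,y), partner's y = g
   (gamma_i = y_j).  Values at action times are the post-reset values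
   (trajectories are right-continuous), so the ODE holds in the sense of
   right derivatives at every t >= 0; at every t > 0 at which the
   individual does not act, x and y are left-continuous; at an action
   time x is reset to 0 and y to 1. *)
Definition indiv_traj (sA sS sC muS muC r tau alpha : R)
    (x y g : R -> R) : Prop :=
  (forall t, 0 <= t ->
      has_right_deriv x t (xfield sA sS sC muS muC alpha (g t) (x t)) /\
      has_right_deriv y t (- r * y t)) /\
  (forall t, 0 < t ->
      (acts tau x t -> x t = 0 /\ y t = 1) /\
      (~ acts tau x t ->
          filterlim x (at_left t) (locally (x t)) /\
          filterlim y (at_left t) (locally (y t)))).

Definition two_indiv_traj (sA sS sC muS muC r tau alpha1 alpha2 : R)
    (x1 y1 x2 y2 : R -> R) : Prop :=
  indiv_traj sA sS sC muS muC r tau alpha1 x1 y1 y2 /\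
  indiv_traj sA sS sC muS muC r tau alpha2 x2 y2 y1.

(* If individual 2 ever acts, any period index beyond that time works.  Otherwise
   y2 stays 0, so x1 = tanh (A1 (t - nT)) on the n-th period: individual 1 acts
   exactly at the multiples of T, and y1 restarts there from 0 (first period) or 1.
   Along x' = k(t) (1 - x^2) the quantity atanh x grows by the integral of k, so
   atanh x2 grows by A T over the first period and by M over each later one.  As
   M > 0, x2 (mT) eventually becomes nonnegative, hence exceeds x_* < 0.
   The trajectories are only known through right derivatives and one-sided limits;
   the closed forms are identified by a monotonicity principle for functions with
   nonpositive right derivative, proved by real induction. *)

From Stdlib Require Import Reals Lra Lia Classical.
From Coquelicot Require Import Coquelicot.
Open Scope R_scope.

Lemma ball_Rabs (x e y : R) : ball x e y <-> Rabs (y - x) < e.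
Proof. easy. Qed.

Lemma at_left_between (a s : R) : a < s -> at_left s (fun u => a < u < s).
Proof.
  intros H. apply (filter_imp (F := locally s) (fun u => a < u)); [intros u Hau Hus; now split|].
  exact (open_gt a s H).
Qed.

Lemma left_lim_le (f : R -> R) (a s L K : R) :
  a < s -> filterlim f (at_left s) (locally L) ->
  (forall u, a < u < s -> f u <= K) -> L <= K.
Proof.
  intros Has Hf Hb.
  apply (filterlim_le (F := at_left s) f (fun _ => K) L K); [| exact Hf | apply filterlim_const].
  exact (filter_imp _ _ Hb (at_left_between a s Has)).
Qed.

Definition left_continuous (f : R -> R) (s : R) : Prop :=
  filterlim f (at_left s) (locally (f s)).

Lemma continuous_of_is_derive (f : R -> R) (x l : R) : is_derive f x l -> continuous f x.
Proof.
  intros H. apply (ex_derive_continuous (K := R_AbsRing) (V := R_NormedModule)). now exists l.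
Qed.

Lemma left_continuous_of_continuous (f : R -> R) (s : R) :
  continuous f s -> left_continuous f s.
Proof. apply filterlim_filter_le_1, filter_le_within. Qed.

Lemma left_lim_of_eq_on (f phi : R -> R) (a s : R) :
  a < s -> (forall u, a < u < s -> f u = phi u) -> continuous phi s ->
  filterlim f (at_left s) (locally (phi s)).
Proof.
  intros Has Heq Hphi.
  apply (filterlim_ext_loc phi); [| now apply left_continuous_of_continuous].
  exact (filter_imp _ _ (fun u Hu => eq_sym (Heq u Hu)) (at_left_between a s Has)).
Qed.

Section FilterlimR.

Context {T : Type} {F : (T -> Prop) -> Prop} {FF : Filter F}.

Lemma filterlim_Rplus (f g : T -> R) (a b : R) :
  filterlim f F (locally a) -> filterlim g F (locally b) ->
  filterlim (fun u => f u + g u) F (locally (a + b)).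
Proof. intros Hf Hg. exact (filterlim_comp_2 _ _ _ Hf Hg (filterlim_plus a b)). Qed.

Lemma filterlim_Rmult (f g : T -> R) (a b : R) :
  filterlim f F (locally a) -> filterlim g F (locally b) ->
  filterlim (fun u => f u * g u) F (locally (a * b)).
Proof. intros Hf Hg. exact (filterlim_comp_2 _ _ _ Hf Hg (filterlim_mult a b)). Qed.

Lemma filterlim_Rminus (f g : T -> R) (a b : R) :
  filterlim f F (locally a) -> filterlim g F (locally b) ->
  filterlim (fun u => f u - g u) F (locally (a - b)).
Proof.
  intros Hf Hg. apply filterlim_Rplus; [exact Hf|].
  eapply filterlim_comp; [exact Hg | exact (filterlim_opp b)].
Qed.

Lemma filterlim_Rinv (f : T -> R) (a : R) :
  a <> 0 -> filterlim f F (locally a) -> filterlim (fun u => / f u) F (locally (/ a)).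
Proof. intros Ha Hf. eapply filterlim_comp; [exact Hf | exact (continuous_Rinv a Ha)]. Qed.

End FilterlimR.

(* Right derivatives in the form of Coquelicot's [filterdiff], so that its sum,
   product and chain rules apply. *)
Definition is_right_derive (f : R -> R) (t l : R) : Prop :=
  filterdiff f (at_right t) (fun h : R => scal h l).

Lemma is_filter_lim_at_right (t : R) : is_filter_lim (at_right t) t.
Proof. intros P HP. now apply filter_le_within. Qed.

Lemma is_right_derive_of_has_right_deriv (f : R -> R) (t l : R) :
  has_right_deriv f t l -> is_right_derive f t l.
Proof.
  intros H. split; [exact (@is_linear_scal_l R_AbsRing R_NormedModule l)|].
  intros x Hx eps.
  rewrite (is_filter_lim_unique _ _ Hx (is_filter_lim_at_right t)).
  destruct (H _ (locally_ball l eps)) as [d Hd].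
  exists d. intros y Hy Hty.
  assert (Hq : ball l eps ((f (t + (y - t)) - f t) / (y - t))).
  { apply Hd; [|lra]. apply ball_Rabs. rewrite Rminus_0_r. now apply ball_Rabs. }
  rewrite Rplus_minus in Hq.
  change (Rabs (f y - f t - (y - t) * l) <= eps * Rabs (y - t)).
  replace (f y - f t - (y - t) * l) with ((y - t) * ((f y - f t) / (y - t) - l))
    by (field; lra).
  rewrite Rabs_mult, !(Rabs_right (y - t)), (Rmult_comm eps) by lra.
  apply Rmult_le_compat_l; [lra|]. left. now apply ball_Rabs.
Qed.

Lemma is_right_derive_bound (f : R -> R) (t l eps : R) :
  is_right_derive f t l -> 0 < eps ->
  exists d, 0 < d /\
    forall y, t < y < t + d -> Rabs (f y - f t - (y - t) * l) <= eps * (y - t).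
Proof.
  intros [_ H] Heps.
  destruct (H t (is_filter_lim_at_right t) (mkposreal _ Heps)) as [d Hd].
  exists d. split; [apply cond_pos|]. intros y Hy.
  assert (Hball : ball t d y) by (apply ball_Rabs; rewrite Rabs_right; lra).
  specialize (Hd y Hball (proj1 Hy)).
  change (Rabs (f y - f t - (y - t) * l) <= eps * Rabs (y - t)) in Hd.
  now rewrite (Rabs_right (y - t)) in Hd by lra.
Qed.

Lemma is_right_derive_continuous (f : R -> R) (t l : R) :
  is_right_derive f t l -> filterlim f (at_right t) (locally (f t)).
Proof.
  intros H.
  apply (filterdiff_continuous_aux (K := R_AbsRing) (U := R_NormedModule) (V := R_NormedModule)).
  - now exists (fun h : R => scal h l).
  - apply is_filter_lim_at_right.
Qed.

Lemma is_right_derive_of_derive (f : R -> R) (t l : R) :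
  is_derive f t l -> is_right_derive f t l.
Proof.
  intros H. apply (filterdiff_locally (F := at_right t) f t); [|exact H].
  apply is_filter_lim_at_right.
Qed.

Lemma is_right_derive_ext (f g : R -> R) (t l1 l2 : R) :
  is_right_derive f t l1 -> (forall s, f s = g s) -> l1 = l2 -> is_right_derive g t l2.
Proof. intros H Hfg <-. exact (filterdiff_ext f g _ Hfg H). Qed.

Lemma is_right_derive_const (c t : R) : is_right_derive (fun _ => c) t 0.
Proof.
  apply (filterdiff_ext_lin _ _ _ (filterdiff_const c)).
  intros h. change (0 = h * 0). ring.
Qed.

Lemma is_right_derive_plus (f g : R -> R) (t lf lg : R) :
  is_right_derive f t lf -> is_right_derive g t lg ->
  is_right_derive (fun s => f s + g s) t (lf + lg).
Proof.
  intros Hf Hg. apply (filterdiff_ext_lin _ _ _ (filterdiff_plus_fct _ _ _ _ Hf Hg)).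
  intros h. change (h * lf + h * lg = h * (lf + lg)). ring.
Qed.

Lemma is_right_derive_minus (f g : R -> R) (t lf lg : R) :
  is_right_derive f t lf -> is_right_derive g t lg ->
  is_right_derive (fun s => f s - g s) t (lf - lg).
Proof.
  intros Hf Hg. apply (filterdiff_ext_lin _ _ _ (filterdiff_minus_fct _ _ _ _ Hf Hg)).
  intros h. change (h * lf + - (h * lg) = h * (lf - lg)). ring.
Qed.

Lemma is_right_derive_mult (f g : R -> R) (t lf lg : R) :
  is_right_derive f t lf -> is_right_derive g t lg ->
  is_right_derive (fun s => f s * g s) t (lf * g t + f t * lg).
Proof.
  intros Hf Hg.
  assert (Hlim : is_filter_lim (filtermap (fun s => (f s, g s)) (at_right t)) (f t, g t)).
  { intros P [e He].
    apply (filterlim_pair _ _ (is_right_derive_continuous _ _ _ Hf)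
                              (is_right_derive_continuous _ _ _ Hg)).
    apply Filter_prod with (ball (f t) e) (ball (g t) e); try apply locally_ball.
    intros u v Hu Hv. now apply He. }
  pose proof (filterdiff_mult (f t, g t) Hlim Rmult_comm) as Hmult.
  apply (filterdiff_ext_lin _ _ _ (filterdiff_comp_2 f g (fun u v => mult u v) _ _
    (fun u v => plus (mult u (g t)) (mult (f t) v)) Hf Hg Hmult)).
  intros h. change (h * lf * g t + f t * (h * lg) = h * (lf * g t + f t * lg)). ring.
Qed.

Lemma is_right_derive_comp (f g : R -> R) (t lf lg : R) :
  is_right_derive f t lf -> is_derive g (f t) lg ->
  is_right_derive (fun s => g (f s)) t (lf * lg).
Proof.
  intros Hf Hg.
  assert (Hg' : filterdiff g (filtermap f (at_right t)) (fun h => scal h lg)).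
  { apply (filterdiff_locally (F := filtermap f (at_right t)) g (f t)); [|exact Hg].
    exact (is_right_derive_continuous _ _ _ Hf). }
  apply (filterdiff_ext_lin _ _ _ (filterdiff_comp f g _ _ Hf Hg')).
  intros h. change (h * lf * lg = h * (lf * lg)). ring.
Qed.

Lemma is_right_derive_inv (f : R -> R) (t l : R) :
  is_right_derive f t l -> f t <> 0 ->
  is_right_derive (fun s => / f s) t (l * - / (f t * f t)).
Proof.
  intros H Hne. apply (is_right_derive_comp f Rinv t l _ H).
  auto_derive; [exact Hne|]. field. exact Hne.
Qed.

Lemma real_induction (P : R -> Prop) (a c : R) :
  (forall s, a <= s <= c -> (forall t, a <= t < s -> P t) -> P s) ->
  (forall s, a <= s < c -> (forall t, a <= t <= s -> P t) ->
     exists d, 0 < d /\ forall t, s < t < s + d -> P t) ->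
  forall t, a <= t <= c -> P t.
Proof.
  intros Hleft Hright t Ht.
  set (S u := a <= u <= c /\ forall v, a <= v <= u -> P v).
  assert (Sa : S a).
  { split; [lra|]. intros v Hv. apply Hleft; [lra|]. intros w Hw. lra. }
  assert (Sbound : bound S) by (exists c; intros u [Hu _]; lra).
  destruct (completeness S Sbound (ex_intro _ a Sa)) as [s [Hub Hlub]].
  assert (Has : a <= s) by (apply Hub; exact Sa).
  assert (Hsc : s <= c) by (apply Hlub; intros u [Hu _]; lra).
  assert (Hbelow : forall v, a <= v < s -> P v).
  { intros v Hv. apply NNPP. intros HPv.
    assert (s <= v); [|lra].
    apply Hlub. intros u [Hu HSu]. apply Rnot_lt_le. intros Hvu. apply HPv, HSu. lra. }
  assert (Ss : forall v, a <= v <= s -> P v).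
  { intros v Hv. destruct (Req_dec v s) as [->|Hne]; [apply Hleft; auto; lra|].
    apply Hbelow. lra. }
  destruct (Req_dec s c) as [<-|Hne]; [apply Ss; lra|].
  destruct (Hright s ltac:(lra) Ss) as [d [Hd Hstep]].
  assert (Hm : 0 < Rmin d (c - s)) by (apply Rmin_pos; lra).
  pose proof (Rmin_l d (c - s)). pose proof (Rmin_r d (c - s)).
  assert (Su : S (s + Rmin d (c - s) / 2)).
  { split; [lra|]. intros v Hv.
    destruct (Rle_or_lt v s); [apply Ss; lra | apply Hstep; lra]. }
  specialize (Hub _ Su). lra.
Qed.

Section NonincreasingOfRightDerive.

Variables (f l : R -> R) (a c d : R).
Hypothesis hd : 0 < d.
Hypothesis hderiv : forall t, a <= t < c -> is_right_derive f t (l t) /\ l t <= 0.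
(* Left continuity is only asked for at points before which [f] stays below
   [f a + d]; this is what rules out jumps in [tanh_solution_unique]. *)
Hypothesis hleft : forall s, a < s <= c ->
  (forall t, a <= t < s -> f t <= f a + d) -> left_continuous f s.

Lemma right_derive_nonpos_slope (eps : R) :
  0 < eps -> eps * (c - a) < d ->
  forall t, a <= t <= c -> f t <= f a + eps * (t - a).
Proof.
  intros Heps Hepsd. apply real_induction.
  - intros s Hs Hbelow.
    destruct (Req_dec s a) as [->|Hne]; [lra|].
    apply (left_lim_le f a s); [lra| |].
    + apply hleft; [lra|]. intros t Ht. specialize (Hbelow t Ht). nra.
    + intros u Hu. specialize (Hbelow u ltac:(lra)). nra.
  - intros s Hs Hupto.
    destruct (hderiv s Hs) as [Hdiff Hl].
    destruct (is_right_derive_bound f s (l s) eps Hdiff Heps) as [r [Hr Hbound]].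
    exists r. split; [exact Hr|]. intros t Ht.
    specialize (Hbound t ltac:(lra)). specialize (Hupto s ltac:(lra)).
    pose proof (Rle_abs (f t - f s - (t - s) * l s)). nra.
Qed.

Lemma right_derive_nonpos_le : forall t, a <= t <= c -> f t <= f a.
Proof.
  intros t Ht. apply Rnot_lt_le. intros Hlt.
  assert (Hat : a < t) by (destruct (Req_dec t a) as [->|]; lra).
  set (eps := Rmin d (f t - f a) / (2 * (c - a))).
  assert (Hm : 0 < Rmin d (f t - f a)) by (apply Rmin_pos; lra).
  pose proof (Rmin_l d (f t - f a)). pose proof (Rmin_r d (f t - f a)).
  assert (Hepsca : eps * (c - a) = Rmin d (f t - f a) / 2) by (unfold eps; field; lra).
  assert (Heps : 0 < eps) by (unfold eps; apply Rdiv_lt_0_compat; lra).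
  pose proof (right_derive_nonpos_slope eps Heps ltac:(lra) t Ht).
  assert (eps * (t - a) <= eps * (c - a)) by (apply Rmult_le_compat_l; lra).
  lra.
Qed.

End NonincreasingOfRightDerive.

Lemma tanh_exp (z : R) : tanh z = (exp (2 * z) - 1) / (exp (2 * z) + 1).
Proof.
  unfold tanh, sinh, cosh.
  replace (2 * z) with (z + z) by ring. rewrite exp_plus, exp_Ropp.
  pose proof (exp_pos z). field. split; nra.
Qed.

Lemma tanh_bounds (z : R) : -1 < tanh z < 1.
Proof.
  rewrite tanh_exp. pose proof (exp_pos (2 * z)).
  split; [apply Rlt_div_r | apply Rlt_div_l]; lra.
Qed.

Lemma tanh_increasing (x y : R) : x < y -> tanh x < tanh y.
Proof.
  intros H. rewrite !tanh_exp.
  assert (exp (2 * x) < exp (2 * y)) by (apply exp_increasing; lra).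
  pose proof (exp_pos (2 * x)). pose proof (exp_pos (2 * y)).
  apply Rlt_0_minus.
  replace ((exp (2 * y) - 1) / (exp (2 * y) + 1) - (exp (2 * x) - 1) / (exp (2 * x) + 1))
    with (2 * (exp (2 * y) - exp (2 * x)) / ((exp (2 * y) + 1) * (exp (2 * x) + 1)))
    by (field; lra).
  apply Rdiv_lt_0_compat; nra.
Qed.

Lemma tanh_0 : tanh 0 = 0.
Proof. rewrite tanh_exp, Rmult_0_r, exp_0. field. Qed.

Lemma tanh_nonneg (z : R) : 0 <= z -> 0 <= tanh z.
Proof.
  intros [Hz| <-]; [|rewrite tanh_0; lra].
  rewrite <- tanh_0. left. now apply tanh_increasing.
Qed.

Lemma is_derive_tanh (z : R) : is_derive tanh z (1 - tanh z ^ 2).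
Proof.
  apply is_derive_ext with (fun u => (exp (2 * u) - 1) / (exp (2 * u) + 1)).
  { intros u. now rewrite tanh_exp. }
  rewrite tanh_exp. pose proof (exp_pos (2 * z)).
  auto_derive; [lra|]. field. lra.
Qed.

Lemma tanh_atanh (x : R) : -1 < x < 1 -> tanh (atanh x) = x.
Proof.
  intros H. rewrite tanh_exp. unfold atanh.
  replace (2 * (ln ((1 + x) / (1 - x)) / 2)) with (ln ((1 + x) / (1 - x))) by field.
  rewrite exp_ln by (apply Rdiv_lt_0_compat; lra). field. lra.
Qed.

Lemma atanh_tanh (z : R) : atanh (tanh z) = z.
Proof.
  unfold atanh. rewrite tanh_exp. pose proof (exp_pos (2 * z)).
  replace ((1 + (exp (2 * z) - 1) / (exp (2 * z) + 1))
             / (1 - (exp (2 * z) - 1) / (exp (2 * z) + 1)))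
    with (exp (2 * z)) by (field; lra).
  rewrite ln_exp. field.
Qed.

Lemma atanh_pos (x : R) : 0 < x < 1 -> 0 < atanh x.
Proof.
  intros H. unfold atanh. apply Rdiv_lt_0_compat; [|lra].
  rewrite <- ln_1. apply ln_increasing; [lra|].
  apply Rlt_div_r; lra.
Qed.

Lemma exp_decay_unique (y : R -> R) (r a b : R) :
  0 <= r ->
  (forall t, a <= t < b -> is_right_derive y t (- r * y t)) ->
  (forall s, a < s < b -> left_continuous y s) ->
  forall t, a <= t < b -> y t = y a * exp (- r * (t - a)).
Proof.
  intros Hr Hy Hleft t Ht.
  set (v s := y a * exp (- r * (s - a))).
  assert (Hv : forall s, is_derive v s (- r * v s)).
  { intros s. unfold v. auto_derive; [easy|]. unfold Rminus. ring. }
  set (F s := (y s - v s) * (y s - v s)).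
  assert (HF : forall s, a <= s < b -> is_right_derive F s (-2 * r * F s) /\ -2 * r * F s <= 0).
  { intros s Hs. split.
    - pose proof (is_right_derive_minus _ _ _ _ _ (Hy s Hs)
                    (is_right_derive_of_derive _ _ _ (Hv s))) as Hdiff.
      eapply is_right_derive_ext; [exact (is_right_derive_mult _ _ _ _ _ Hdiff Hdiff) | |].
      + intros u. reflexivity.
      + unfold F. ring.
    - unfold F. pose proof (Rle_0_sqr (y s - v s)). unfold Rsqr in *. nra. }
  assert (HFa : F a = 0) by (unfold F, v; rewrite Rminus_diag, Rmult_0_r, exp_0; ring).
  destruct (Req_dec t a) as [->|Hne]; [rewrite Rminus_diag, Rmult_0_r, exp_0; ring|].
  assert (HFt : F t <= F a).
  { apply (right_derive_nonpos_le F (fun s => -2 * r * F s) a t 1); try lra.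
    - intros s Hs. apply HF. lra.
    - intros s Hs _. unfold F.
      assert (Hd : filterlim (fun u => y u - v u) (at_left s) (locally (y s - v s))).
      { apply filterlim_Rminus; [apply Hleft; lra|].
        apply left_continuous_of_continuous, (continuous_of_is_derive _ _ _ (Hv s)). }
      exact (filterlim_Rmult _ _ _ _ Hd Hd). }
  rewrite HFa in HFt. unfold F in HFt. fold (v t). apply Rminus_diag_uniq. nra.
Qed.

(* For x = tanh u and w = tanh v, (x - w) / (1 - x w) = tanh (u - v), so [tanh_gap]
   is a function of u - v.  It is defined for all real x, hence stays constant along
   two solutions of x' = k (1 - x^2) before x is known to remain in (-1, 1). *)
Definition tanh_gap (x w : R) : R :=
  (x - w) * (x - w) / ((1 - x * w) * (1 - x * w) + (x - w) * (x - w)).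

Lemma tanh_gap_den_pos (x w : R) :
  -1 < w < 1 -> 0 < (1 - x * w) * (1 - x * w) + (x - w) * (x - w).
Proof.
  intros Hw. pose proof (Rle_0_sqr (1 - x * w)). pose proof (Rle_0_sqr (x - w)). unfold Rsqr in *.
  destruct (Req_dec x w) as [->|Hne].
  - assert (0 < 1 - w * w) by nra. rewrite Rminus_diag. nra.
  - assert (0 < (x - w) * (x - w)) by (apply Rsqr_pos_lt; lra). lra.
Qed.

Lemma tanh_gap_nonneg (x w : R) : -1 < w < 1 -> 0 <= tanh_gap x w.
Proof.
  intros Hw. pose proof (tanh_gap_den_pos x w Hw).
  apply Rdiv_le_0_compat; [apply Rle_0_sqr | exact H].
Qed.

Lemma tanh_gap_eq0 (x w : R) : -1 < w < 1 -> tanh_gap x w = 0 -> x = w.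
Proof.
  intros Hw H. pose proof (tanh_gap_den_pos x w Hw).
  unfold tanh_gap in H. apply Rminus_diag_uniq.
  assert (Hsq : (x - w) * (x - w) = 0).
  { apply (Rmult_eq_reg_r (/ ((1 - x * w) * (1 - x * w) + (x - w) * (x - w)))).
    - rewrite Rmult_0_l. exact H.
    - apply Rinv_neq_0_compat. lra. }
  nra.
Qed.

Lemma tanh_gap_lower (x w g : R) :
  -1 < x < 1 -> -1 < w < 1 -> 0 < g <= x - w -> g * g / 8 <= tanh_gap x w.
Proof.
  intros Hx Hw Hg. pose proof (tanh_gap_den_pos x w Hw).
  assert (0 < 1 - x * w < 2) by nra.
  assert (Hden : (1 - x * w) * (1 - x * w) + (x - w) * (x - w) <= 8) by nra.
  apply Rle_trans with ((x - w) * (x - w) / 8); [nra|].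
  apply Rmult_le_compat_l; [apply Rle_0_sqr|].
  apply Rinv_le_contravar; assumption.
Qed.

Lemma tanh_gap_left_lim (x w : R -> R) (s X : R) :
  -1 < w s < 1 -> filterlim x (at_left s) (locally X) -> left_continuous w s ->
  filterlim (fun u => tanh_gap (x u) (w u)) (at_left s) (locally (tanh_gap X (w s))).
Proof.
  intros Hws Hx Hw.
  assert (HN : filterlim (fun u => x u - w u) (at_left s) (locally (X - w s)))
    by exact (filterlim_Rminus _ _ _ _ Hx Hw).
  assert (HP : filterlim (fun u => 1 - x u * w u) (at_left s) (locally (1 - X * w s)))
    by exact (filterlim_Rminus _ _ _ _ (filterlim_const 1) (filterlim_Rmult _ _ _ _ Hx Hw)).
  apply (filterlim_Rmult _ _ _ _ (filterlim_Rmult _ _ _ _ HN HN)).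
  apply filterlim_Rinv; [apply Rgt_not_eq, tanh_gap_den_pos, Hws|].
  exact (filterlim_Rplus _ _ _ _ (filterlim_Rmult _ _ _ _ HP HP) (filterlim_Rmult _ _ _ _ HN HN)).
Qed.

Lemma is_right_derive_tanh_gap (x w : R -> R) (k t : R) :
  -1 < w t < 1 ->
  is_right_derive x t (k * ((1 - x t) * (1 + x t))) ->
  is_derive w t (k * (1 - w t ^ 2)) ->
  is_right_derive (fun u => tanh_gap (x u) (w u)) t 0.
Proof.
  intros Hwt Hx Hw.
  pose proof (is_right_derive_of_derive _ _ _ Hw) as Hw'.
  pose proof (is_right_derive_minus _ _ _ _ _ Hx Hw') as HN.
  pose proof (is_right_derive_minus _ _ _ _ _ (is_right_derive_const 1 t)
                (is_right_derive_mult _ _ _ _ _ Hx Hw')) as HP.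
  pose proof (is_right_derive_plus _ _ _ _ _ (is_right_derive_mult _ _ _ _ _ HP HP)
                (is_right_derive_mult _ _ _ _ _ HN HN)) as HD.
  pose proof (tanh_gap_den_pos (x t) (w t) Hwt) as Hden.
  pose proof (is_right_derive_mult _ _ _ _ _ (is_right_derive_mult _ _ _ _ _ HN HN)
                (is_right_derive_inv _ _ _ HD ltac:(lra))) as HF.
  eapply is_right_derive_ext; [exact HF | reflexivity |].
  cbv beta. field. lra.
Qed.

Lemma tanh_solution_unique (x k W : R -> R) (a c tau g : R) :
  -1 < tau < 1 -> 0 < g ->
  (forall t, is_derive W t (k t)) ->
  (forall t, a <= t < c -> is_right_derive x t (k t * ((1 - x t) * (1 + x t)))) ->
  (forall s, a < s <= c -> left_continuous x s \/ filterlim x (at_left s) (locally tau)) ->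
  (forall s, a < s <= c -> filterlim x (at_left s) (locally tau) -> tanh (W s) <= tau - g) ->
  x a = tanh (W a) ->
  forall t, a <= t <= c -> x t = tanh (W t).
Proof.
  intros Htau Hg HW Hx Hleft Hgap Ha.
  set (w s := tanh (W s)).
  assert (Hw : forall s, is_derive w s (k s * (1 - w s ^ 2))).
  { intros s. apply (is_derive_comp tanh W s); [apply is_derive_tanh | apply HW]. }
  assert (Hwb : forall s, -1 < w s < 1) by (intros s; apply tanh_bounds).
  set (F s := tanh_gap (x s) (w s)).
  assert (HFa : F a = 0)
    by (unfold F, tanh_gap; rewrite Ha; fold (w a); rewrite Rminus_diag; unfold Rdiv; ring).
  assert (HFle : forall t, a <= t <= c -> F t <= F a).
  { apply (right_derive_nonpos_le F (fun _ => 0) a c (g * g / 16)); [nra | |].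
    - intros s Hs. split; [|lra].
      exact (is_right_derive_tanh_gap x w (k s) s (Hwb s) (Hx s Hs) (Hw s)).
    - intros s Hs Hbelow.
      assert (Hwc : left_continuous w s)
        by exact (left_continuous_of_continuous _ _ (continuous_of_is_derive _ _ _ (Hw s))).
      destruct (Hleft s Hs) as [Hxc | Hxtau];
        [exact (tanh_gap_left_lim x w s (x s) (Hwb s) Hxc Hwc)|].
      (* A jump to [tau] would make [F] approach at least g^2/8 from the left. *)
      exfalso.
      assert (Hlow : g * g / 8 <= tanh_gap tau (w s))
        by (apply tanh_gap_lower; [lra | apply Hwb |];
            specialize (Hgap s Hs Hxtau); fold (w s) in Hgap; lra).
      assert (Hup : tanh_gap tau (w s) <= F a + g * g / 16).
      { apply (left_lim_le F a s); [lra | exact (tanh_gap_left_lim x w s tau (Hwb s) Hxtau Hwc)|].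
        intros u Hu. apply Hbelow. lra. }
      assert (0 < g * g) by nra. lra. }
  intros t Ht. apply (tanh_gap_eq0 _ _ (Hwb t)).
  pose proof (HFle t Ht). pose proof (tanh_gap_nonneg (x t) (w t) (Hwb t)).
  unfold F in *. lra.
Qed.

Section Individual.

Variables (sA sS sC muS muC r tau alpha : R) (x y g : R -> R).
Hypothesis hr : 0 <= r.
Hypothesis htau : -1 < tau < 1.
Hypothesis htraj : indiv_traj sA sS sC muS muC r tau alpha x y g.

Lemma traj_y_decay (a b : R) :
  0 <= a -> (forall s, a < s < b -> ~ acts tau x s) ->
  forall t, a <= t < b -> y t = y a * exp (- r * (t - a)).
Proof.
  intros Ha Hno. destruct htraj as [Hderiv Hjump].
  apply exp_decay_unique; [exact hr | |].
  - intros t Ht. apply is_right_derive_of_has_right_deriv, (Hderiv t ltac:(lra)).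
  - intros s Hs. apply (proj2 (Hjump s ltac:(lra)) (Hno s Hs)).
Qed.

Lemma traj_x_tanh (W G : R -> R) (a c gap : R) :
  0 <= a -> 0 < gap ->
  (forall t, is_derive W t ((sA * alpha + sS * (G t - muS)) * (sC * (G t + muC)))) ->
  (forall t, a <= t < c -> g t = G t) ->
  (forall s, a < s <= c -> acts tau x s -> tanh (W s) <= tau - gap) ->
  x a = tanh (W a) ->
  forall t, a <= t <= c -> x t = tanh (W t).
Proof.
  intros Ha Hgap0 HW HG Hgap Hxa. destruct htraj as [Hderiv Hjump].
  apply (tanh_solution_unique x _ W a c tau gap htau Hgap0 HW); [| | |exact Hxa].
  - intros t Ht. cbv beta. rewrite <- (HG t Ht).
    apply is_right_derive_of_has_right_deriv, (Hderiv t ltac:(lra)).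
  - intros s Hs. destruct (classic (acts tau x s)) as [[_ Hlim] | Hnot]; [now right|].
    left. apply (proj2 (Hjump s ltac:(lra)) Hnot).
  - intros s Hs Hlim. apply Hgap; [exact Hs|]. split; [lra | exact Hlim].
Qed.

End Individual.

(* Integral over [0, s] of individual 2's rate when the partner's y decays from v,
   i.e. the increase of atanh x2 over that time. *)
Definition gain (sA sS sC muS muC r alpha v s : R) : R :=
  (sA * alpha - sS * muS) * sC * muC * s
  + ((sA * alpha - sS * muS) * sC + sS * sC * muC) * v * (1 - exp (- r * s)) / r
  + sS * sC * v * v * (1 - exp (- r * s) * exp (- r * s)) / (2 * r).

Lemma is_derive_gain (sA sS sC muS muC r alpha c a v t : R) :
  r <> 0 ->
  is_derive (fun u => c + gain sA sS sC muS muC r alpha v (u - a)) t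
    ((sA * alpha + sS * (v * exp (- r * (t - a)) - muS)) * (sC * (v * exp (- r * (t - a)) + muC))).
Proof.
  intros Hr. unfold gain. auto_derive; [repeat split; exact Hr|].
  unfold Rminus. field. exact Hr.
Qed.

Lemma gain_0 (sA sS sC muS muC r alpha v : R) : gain sA sS sC muS muC r alpha v 0 = 0.
Proof. unfold gain. rewrite !Rmult_0_r, exp_0. unfold Rdiv. ring. Qed.

Definition period_start_y (n : nat) : R := match n with O => 0 | S _ => 1 end.

Section TwoIndividuals.

Variables (sA sS sC muS muC r tau alpha1 alpha2 T : R) (x1 y1 x2 y2 : R -> R).

Let A1 := (sA * alpha1 - sS * muS) * sC * muC.

Hypothesis hr : 0 < r.
Hypothesis htau : 0 < tau < 1.
Hypothesis hA1 : 0 < A1.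
Hypothesis hT : 0 < T.
Hypothesis hA1T : tanh (A1 * T) = tau.
Hypothesis hsys : two_indiv_traj sA sS sC muS muC r tau alpha1 alpha2 x1 y1 x2 y2.
Hypothesis hno2 : forall t, ~ acts tau x2 t.
Hypothesis hy20 : y2 0 = 0.

Lemma y2_zero (t : R) : 0 <= t -> y2 t = 0.
Proof.
  intros Ht. destruct hsys as [_ H2].
  rewrite (traj_y_decay sA sS sC muS muC r tau alpha2 x2 y2 y1 (Rlt_le _ _ hr) H2 0 (t + 1));
    [| lra | | lra].
  - rewrite hy20. ring.
  - intros s _. apply hno2.
Qed.

Lemma x1_tanh_on_period (a : R) :
  0 <= a -> x1 a = 0 -> forall t, a <= t < a + T -> x1 t = tanh (A1 * (t - a)).
Proof.
  intros Ha Hxa t Ht. destruct hsys as [H1 _].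
  assert (Hbelow : forall s, s <= t -> tanh (A1 * (s - a)) <= tanh (A1 * (t - a))).
  { intros s Hs. destruct (Req_dec s t) as [->|Hne]; [lra|].
    left. apply tanh_increasing, Rmult_lt_compat_l; lra. }
  apply (traj_x_tanh sA sS sC muS muC r tau alpha1 x1 y1 y2 ltac:(lra) H1
           (fun u => A1 * (u - a)) (fun _ => 0)
           a t (tau - tanh (A1 * (t - a)))); [lra | | | | | | lra].
  - rewrite <- hA1T. apply Rlt_0_minus, tanh_increasing, Rmult_lt_compat_l; lra.
  - intros u. auto_derive; [easy|]. unfold A1. ring.
  - intros u Hu. apply y2_zero. lra.
  - intros s Hs _. specialize (Hbelow s (proj2 Hs)). lra.
  - rewrite Hxa, Rminus_diag, Rmult_0_r, tanh_0. reflexivity.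
Qed.

Lemma x1_acts_at_period_end (a : R) :
  0 <= a -> x1 a = 0 ->
  (forall s, a < s < a + T -> ~ acts tau x1 s) /\ acts tau x1 (a + T).
Proof.
  intros Ha Hxa.
  assert (Hlim : forall s, a < s <= a + T ->
            filterlim x1 (at_left s) (locally (tanh (A1 * (s - a))))).
  { intros s Hs. apply (left_lim_of_eq_on x1 (fun u => tanh (A1 * (u - a))) a s); [lra | |].
    - intros u Hu. apply x1_tanh_on_period; auto; lra.
    - apply (continuous_of_is_derive _ _ (A1 * (1 - tanh (A1 * (s - a)) ^ 2))).
      apply (is_derive_comp tanh (fun u => A1 * (u - a))); [apply is_derive_tanh|].
      auto_derive; [easy | ring]. }
  split.
  - intros s Hs [_ Hact].
    assert (Heq := filterlim_locally_unique _ _ _ Hact (Hlim s ltac:(lra))).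
    assert (tanh (A1 * (s - a)) < tanh (A1 * T)); [|lra].
    apply tanh_increasing, Rmult_lt_compat_l; lra.
  - split; [lra|]. rewrite <- hA1T. replace (A1 * T) with (A1 * (a + T - a)) by ring.
    apply Hlim. lra.
Qed.

Lemma x1_period_step (a : R) :
  0 <= a -> x1 a = 0 ->
  x1 (a + T) = 0 /\ y1 (a + T) = 1 /\
  forall t, a <= t < a + T -> y1 t = y1 a * exp (- r * (t - a)).
Proof.
  intros Ha Hxa. destruct (x1_acts_at_period_end a Ha Hxa) as [Hno Hact].
  destruct hsys as [H1 _].
  destruct (proj1 (proj2 H1 (a + T) ltac:(lra)) Hact) as [Hx Hy].
  split; [exact Hx | split; [exact Hy|]].
  exact (traj_y_decay sA sS sC muS muC r tau alpha1 x1 y1 y2 (Rlt_le _ _ hr) H1 a (a + T) Ha Hno).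
Qed.

Hypothesis hx10 : x1 0 = 0.
Hypothesis hy10 : y1 0 = 0.

Lemma x1_y1_at_multiple (n : nat) : x1 (INR n * T) = 0 /\ y1 (INR n * T) = period_start_y n.
Proof.
  induction n as [|n [Hx Hy]]; [simpl; rewrite Rmult_0_l; auto|].
  pose proof (pos_INR n).
  destruct (x1_period_step (INR n * T) ltac:(nra) Hx) as [Hx' [Hy' _]].
  rewrite S_INR, Rmult_plus_distr_r, Rmult_1_l. auto.
Qed.

Lemma y1_on_period (n : nat) (t : R) :
  INR n * T <= t < INR n * T + T ->
  y1 t = period_start_y n * exp (- r * (t - INR n * T)).
Proof.
  intros Ht. pose proof (pos_INR n). destruct (x1_y1_at_multiple n) as [Hx Hy].
  rewrite <- Hy. apply (x1_period_step (INR n * T)); auto; nra.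
Qed.

Lemma x2_period_step (a v : R) :
  0 <= a -> -1 < x2 a < 1 ->
  (forall t, a <= t < a + T -> y1 t = v * exp (- r * (t - a))) ->
  x2 (a + T) = tanh (atanh (x2 a) + gain sA sS sC muS muC r alpha2 v T).
Proof.
  intros Ha Hxa Hy. destruct hsys as [_ H2].
  replace (gain sA sS sC muS muC r alpha2 v T)
    with (gain sA sS sC muS muC r alpha2 v (a + T - a)) by (f_equal; ring).
  apply (traj_x_tanh sA sS sC muS muC r tau alpha2 x2 y2 y1 ltac:(lra) H2
           (fun u => atanh (x2 a) + gain sA sS sC muS muC r alpha2 v (u - a))
           (fun u => v * exp (- r * (u - a))) a (a + T) 1); [lra | lra | | exact Hy | | | lra].
  - intros t. apply is_derive_gain. lra.
  - intros s _ Hact. exfalso. exact (hno2 s Hact).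
  - cbv beta. rewrite Rminus_diag, gain_0, Rplus_0_r, tanh_atanh by exact Hxa. reflexivity.
Qed.

Lemma x2_at_multiple (n : nat) :
  -1 < x2 0 < 1 ->
  x2 (INR (S n) * T) = tanh (atanh (x2 0) + gain sA sS sC muS muC r alpha2 0 T
                             + INR n * gain sA sS sC muS muC r alpha2 1 T).
Proof.
  intros Hx0. induction n as [|n IH].
  - replace (INR 1 * T) with (0 + T) by (simpl; ring).
    rewrite (x2_period_step 0 0); [simpl; f_equal; ring | lra | exact Hx0 |].
    intros t Ht. rewrite (y1_on_period 0 t) by (simpl; lra). simpl. ring.
  - pose proof (pos_INR (S n)).
    replace (INR (S (S n)) * T) with (INR (S n) * T + T) by (rewrite (S_INR (S n)); ring).
    rewrite (x2_period_step (INR (S n) * T) 1); [| nra | rewrite IH; apply tanh_bounds |].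
    + rewrite IH, atanh_tanh, S_INR. f_equal. ring.
    + intros t Ht. exact (y1_on_period (S n) t Ht).
Qed.

End TwoIndividuals.

Lemma INR_mult_unbounded (T u : R) : 0 < T -> exists n : nat, u < INR n * T.
Proof.
  intros hT. destruct (INR_unbounded (u / T)) as [n Hn]. exists n.
  apply (Rmult_lt_compat_r T) in Hn; [|exact hT].
  unfold Rdiv in Hn. rewrite Rmult_assoc, Rinv_l, Rmult_1_r in Hn by lra. lra.
Qed.

Lemma opp_one_sub_sqrt_div_neg (z : R) : 0 < z < 1 -> - (1 - sqrt (1 - z ^ 2)) / z < 0.
Proof.
  intros Hz.
  assert (Hs : sqrt (1 - z ^ 2) < 1).
  { rewrite <- sqrt_1 at 2. apply sqrt_lt_1_alt. replace (z ^ 2) with (z * z) by ring. split; nra. }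
  assert (0 < / z) by (apply Rinv_0_lt_compat; lra).
  unfold Rdiv. nra.
Qed.

Theorem lemma2
  (sA sS sC muS muC r tau alpha1 alpha2 : R)
  (x1 y1 x2 y2 : R -> R)
  (hsA : 0 <= sA) (hsS : 0 <= sS) (hsC : 0 < sC)
  (hmuS : 0 <= muS <= 1) (hmuC : 0 < muC) (hr : 0 < r)
  (htau : 0 < tau < 1)
  (ha1 : -1 < alpha1 < 1) (ha2 : -1 < alpha2 < 1)
  (h1 : sA * alpha1 - sS * muS > 0)
  (h2 : sA * alpha2 - sS * muS <= 0)
  (h3 : x1 0 = 0 /\ y1 0 = 0 /\ y2 0 = 0 /\ -1 < x2 0 < tau)
  (hsys : two_indiv_traj sA sS sC muS muC r tau alpha1 alpha2 x1 y1 x2 y2) :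
  let A1 := (sA * alpha1 - sS * muS) * sC * muC in
  let T := atanh tau / A1 in
  let A := (sA * alpha2 - sS * muS) * sC * muC in
  let B := - / r * ((sA * alpha2 - sS * muS) * sC + sS * sC * muC) in
  let C := - (sS * sC) / (2 * r) in
  let M := A * T + B * exp (- r * T) + C * exp (- 2 * r * T) - B - C in
  M > 0 ->
  let xs := - (1 - sqrt (1 - (tanh M) ^ 2)) / tanh M in
  exists m : nat, (1 <= m)%nat /\
    ((exists t, 0 < t <= (INR m + 1) * T /\ acts tau x2 t) \/
     ((forall t, 0 <= t <= INR m * T -> ~ acts tau x2 t) /\
      x2 (INR m * T) > xs)).
Proof.
  intros A1 T A B C M HM xs.
  destruct h3 as (hx10 & hy10 & hy20 & hx20).
  assert (hA1 : 0 < A1) by (apply Rmult_lt_0_compat; [apply Rmult_lt_0_compat|]; lra).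
  assert (hT : 0 < T) by (apply Rdiv_lt_0_compat; [apply atanh_pos|]; lra).
  assert (hA1T : tanh (A1 * T) = tau).
  { unfold T. replace (A1 * (atanh tau / A1)) with (atanh tau) by (field; lra).
    apply tanh_atanh. lra. }
  destruct (classic (exists t, acts tau x2 t)) as [[t Hact] | Hnever].
  - destruct (INR_mult_unbounded T t hT) as [n Hn].
    exists (S n). split; [lia|]. left. exists t.
    rewrite S_INR. pose proof (pos_INR n). pose proof (proj1 Hact).
    split; [split; nra | exact Hact].
  - assert (hno2 : forall t, ~ acts tau x2 t) by (intros t Hact; apply Hnever; now exists t).
    assert (Hgain1 : gain sA sS sC muS muC r alpha2 1 T = M).
    { unfold gain, M, A, B, C. replace (- 2 * r * T) with (- r * T + - r * T) by ring.
      rewrite exp_plus. field. lra. }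
    set (u1 := atanh (x2 0) + gain sA sS sC muS muC r alpha2 0 T).
    destruct (INR_mult_unbounded M (- u1) HM) as [n Hn].
    exists (S n). split; [lia|]. right. split; [intros t _; apply hno2|].
    rewrite (x2_at_multiple sA sS sC muS muC r tau alpha1 alpha2 T x1 y1 x2 y2
               hr htau hA1 hT hA1T hsys hno2 hy20 hx10 hy10 n ltac:(lra)), Hgain1.
    fold u1. pose proof (tanh_bounds M).
    assert (HtM : 0 < tanh M) by (rewrite <- tanh_0; now apply tanh_increasing).
    apply Rlt_le_trans with 0; [apply opp_one_sub_sqrt_div_neg; lra|].
    apply tanh_nonneg. lra.
Qed.
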